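(* Let $p_1>p_2$ be relatively prime positive integers and $c\in[0,1]$. Write the first $p_1+p_2$ terms of $S_c(p_1,p_2)$ as $1^{k_1},2,1^{k_2},2,\dots,1^{k_{p_2}},2,1^{p_1-(k_1+\cdots+k_{p_2})}$. Then $p_1=k_1+\cdots+k_{p_2}$ (that is, the period ends with a $2$) if and only if $c=1$.
   Context: Stationary divisor method with cut point $c\in[0,1]$ for votes $(p_1,p_2)$: seats are allocated one at a time. Initially $a_1=a_2=0$; each next seat goes to a party $i$ maximizing $p_i/(a_i+c)$, whose $a_i$ then increases by $1$. Ties are broken in favor of party $1$. For $c=0$ the convention is that $p_1/0>p_2/0$, and $p_i/0>p_j/k$ for $k>0$. $S_c(p_1,p_2)$ is the infinite sequence of party labels (in $\{1,2\}$) of successive seats. It is periodic with period $p_1+p_2$, with $p_1$ ones and $p_2$ twos per period. The notation $1^k$ denotes $k$ consecutive $1$'s. *)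

From mathcomp Require Import all_boot all_order all_algebra.
Set Implicit Arguments. Unset Strict Implicit. Unset Printing Implicit Defensive.
Import Order.TTheory GRing.Theory Num.Theory.
Local Open Scope ring_scope.

(* Stationary divisor method with cut point c, votes (p1,p2).
   A state is the pair (a1,a2) of seats already allocated. *)

(* Does party 1 get the next seat in state (a1,a2)?  Party i's quotient is
   p_i / (a_i + c).  Convention for c = 0: p1/0 > p2/0 and p_i/0 > p_j/k for
   k > 0; ties go to party 1. *)
Definition party1_next (R : realFieldType) (c : R) (p1 p2 : nat) (a : nat * nat) : bool :=
  let d1 := (a.1)%:R + c in
  let d2 := (a.2)%:R + c in
  (d1 == 0) || ((d2 != 0) && ((p2%:R / d2) <= (p1%:R / d1))).

Definition sdm_step (R : realFieldType) (c : R) (p1 p2 : nat) (a : nat * nat) : nat * nat :=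
  if party1_next c p1 p2 a then (a.1.+1, a.2) else (a.1, a.2.+1).

Definition sdm_state (R : realFieldType) (c : R) (p1 p2 : nat) (n : nat) : nat * nat :=
  iter n (sdm_step c p1 p2) (0%N, 0%N).

(* S_c(p1,p2) as a function nat -> {1,2}; index n (0-based) is the label of
   the (n+1)-st seat. *)
Definition S_seq (R : realFieldType) (c : R) (p1 p2 : nat) (n : nat) : nat :=
  if party1_next c p1 p2 (sdm_state c p1 p2 n) then 1%N else 2%N.

From mathcomp Require Import all_boot all_order all_algebra.
From mathcomp Require Import reals.
From mathcomp Require Import zify ring lra.
Import Order.TTheory GRing.Theory Num.Theory.
Local Open Scope ring_scope.

(* Clearing denominators, party 1 takes the next seat in state (a1,a2) iff
   g(a) := p1 (a2 + c) - p2 (a1 + c) >= 0.  A seat for party 1 lowers g by p2,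
   a seat for party 2 raises it by p1, so g stays in [-p2, p1).  After
   p1 + p2 - 1 seats the state lies on the antidiagonal a1 + a2 = p1 + p2 - 1,
   along which g drops by p1 + p2 per unit of a1; the window [-p2, p1) then
   leaves only (p1, p2 - 1), where g = -p2 + (c - 1)(p1 - p2) forces c = 1
   and the last seat goes to party 2, and (p1 - 1, p2), where
   g = p1 + (c - 1)(p1 - p2) forces c < 1 and the last seat goes to party 1. *)

Section StationaryDivisor.
Variables (R : realFieldType) (p1 p2 : nat) (c : R).
Hypotheses (p2_gt0 : (0 < p2)%N) (p2_lt_p1 : (p2 < p1)%N).
Hypotheses (c_ge0 : 0 <= c) (c_le1 : c <= 1).

Definition quotient_gap (a : nat * nat) : R :=
  p1%:R * ((a.2)%:R + c) - p2%:R * ((a.1)%:R + c).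

Lemma party1_nextE a : party1_next c p1 p2 a = (0 <= quotient_gap a).
Proof.
have p2R_gt0 : (0 : R) < p2%:R by rewrite ltr0n.
rewrite /party1_next /quotient_gap.
set d1 := (a.1)%:R + c; set d2 := (a.2)%:R + c.
have d1_ge0 : 0 <= d1 by rewrite addr_ge0.
have d2_ge0 : 0 <= d2 by rewrite addr_ge0.
have [->|d1_neq0] /= := eqVneq d1 0; first by rewrite mulr0 subr0 mulr_ge0.
have d1_gt0 : 0 < d1 by rewrite lt_def d1_neq0.
have [->|d2_neq0] /= := eqVneq d2 0.
  by apply/esym/negbTE; rewrite mulr0 sub0r oppr_ge0 -ltNge mulr_gt0.
have d2_gt0 : 0 < d2 by rewrite lt_def d2_neq0.
by rewrite ler_pdivlMr // mulrAC ler_pdivrMr // subr_ge0 [p1%:R * _]mulrC.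
Qed.

Lemma quotient_gap_step a :
  quotient_gap (sdm_step c p1 p2 a) =
  if 0 <= quotient_gap a then quotient_gap a - p2%:R else quotient_gap a + p1%:R.
Proof.
rewrite /sdm_step party1_nextE /quotient_gap.
by case: ifP => _ /=; rewrite -natr1; ring.
Qed.

Lemma sdm_state_sum n : ((sdm_state c p1 p2 n).1 + (sdm_state c p1 p2 n).2)%N = n.
Proof.
elim: n => [|n IHn] //; rewrite /sdm_state iterS -/(sdm_state c p1 p2 n).
by rewrite /sdm_step; case: ifP => _ /=; rewrite ?addSn ?addnS IHn.
Qed.

Lemma quotient_gap_bounds n :
  - p2%:R <= quotient_gap (sdm_state c p1 p2 n) < p1%:R.
Proof.
have p2R_lt_p1R : (p2%:R : R) < p1%:R by rewrite ltr_nat.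
have p2R_gt0 : (0 : R) < p2%:R by rewrite ltr0n.
elim: n => [|n IHn].
  rewrite /quotient_gap /= !add0r -mulrBl.
  have p12_ge0 : 0 <= p1%:R - p2%:R :> R by rewrite subr_ge0 ltW.
  have := mulr_ge0 p12_ge0 c_ge0; have := ler_wpM2l p12_ge0 c_le1.
  by rewrite mulr1 => ? ?; apply/andP; split; lra.
rewrite /sdm_state iterS -/(sdm_state c p1 p2 n) quotient_gap_step.
move: IHn; set g := quotient_gap _ => /andP [g_ge g_lt].
by have [g_ge0|g_lt0] := leP 0 g; apply/andP; split; lra.
Qed.

Lemma quotient_gap_antidiagonal a1 a2 : ((a1 + a2).+1 = p1 + p2)%N ->
  quotient_gap (a1, a2) =
  (p1%:R + p2%:R) * (p1%:R - a1%:R) - p1%:R + c * (p1%:R - p2%:R).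
Proof.
move=> sum_a; have sumR : a1%:R + a2%:R + 1 = p1%:R + p2%:R :> R.
  by rewrite -natrD natr1 sum_a natrD.
rewrite /quotient_gap /=.
have -> : a2%:R = p1%:R + p2%:R - 1 - a1%:R :> R by lra.
ring.
Qed.

Lemma quotient_gap_end_of_period :
  (quotient_gap (sdm_state c p1 p2 (p1 + p2).-1) < 0) = (c == 1).
Proof.
have := quotient_gap_bounds (p1 + p2).-1; have := sdm_state_sum (p1 + p2).-1.
case: (sdm_state c p1 p2 _) => a1 a2 /= sum_a.
have {}sum_a : ((a1 + a2).+1 = p1 + p2)%N by lia.
rewrite quotient_gap_antidiagonal // => /andP [g_ge g_lt].
have p12_gt0 : (0 : R) < p1%:R - p2%:R by rewrite subr_gt0 ltr_nat.
have p2R_gt0 : (0 : R) < p2%:R by rewrite ltr0n.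
have sum_gt0 : (0 : R) < p1%:R + p2%:R by rewrite -natrD ltr0n; lia.
have c_p12 : 0 <= c * (p1%:R - p2%:R) <= p1%:R - p2%:R.
  by rewrite mulr_ge0 ?ler_piMl // ltW.
move: c_p12 => /andP [c_p12_ge0 c_p12_le].
have : a1%:R <= p1%:R :> R.
  by rewrite -subr_ge0 -(pmulr_rge0 _ sum_gt0); lra.
have : p1%:R < a1%:R + 2 :> R.
  rewrite -subr_gt0 -(pmulr_rgt0 _ sum_gt0).
  have -> : (p1%:R + p2%:R) * (a1%:R + 2 - p1%:R) =
            2 * (p1%:R + p2%:R) - (p1%:R + p2%:R) * (p1%:R - a1%:R) :> R by ring.
  lra.
rewrite -[2]/(2%:R) -natrD ltr_nat ler_nat => p1_lt a1_le.
have [a1E|a1E] : a1 = p1 \/ a1 = p1.-1 by lia.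
- rewrite a1E subrr mulr0 sub0r in g_ge *.
  have c1 : c = 1.
    apply/eqP; rewrite eq_le c_le1 -subr_ge0 -(pmulr_lge0 _ p12_gt0); lra.
  by rewrite c1 eqxx mul1r; lra.
- have x1 : p1%:R - a1%:R = 1 :> R.
    by apply/eqP; rewrite subr_eq addrC natr1 eqr_nat; lia.
  rewrite x1 mulr1 in g_lt *.
  have c_lt1 : c < 1 by rewrite -subr_gt0 -(pmulr_lgt0 _ p12_gt0); lra.
  by rewrite lt_eqF //; apply/negbTE; rewrite -leNgt; lra.
Qed.

End StationaryDivisor.

Theorem mainTheorem12 (R : realType) (p1 p2 : nat) (c : R) :
  (0 < p2)%N -> (p2 < p1)%N -> coprime p1 p2 ->
  0 <= c -> c <= 1 ->
  (S_seq c p1 p2 (p1 + p2).-1 = 2%N <-> c = 1).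
Proof.
move=> p2_gt0 p2_lt_p1 _ c_ge0 c_le1.
rewrite /S_seq party1_nextE // leNgt quotient_gap_end_of_period //.
by case: eqP.
Qed.
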